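(* Let $\mathbf v\in\mathbb Z^4$ satisfy $Q_{\mathcal D}(\mathbf v)=4$, and let $\mathcal C$ be the set of all integers occurring as a coordinate of some element of the orbit $\mathcal A[\mathbf v]$ (the curvatures of the corresponding integral hyperbolic Apollonian packing). Then the set of residues modulo $12$ of elements of $\mathcal C$ omits at least three congruence classes modulo $12$.
   Context: $Q_{\mathcal D}(a,b,c,d)=2(a^2+b^2+c^2+d^2)-(a+b+c+d)^2$. $\mathbf S_i$ ($i=1,\dots,4$) is the $4\times4$ integer matrix replacing the $i$-th coordinate $a_i$ of a column vector by $2\sum_{j\ne i}a_j-a_i$, other coordinates fixed; the Apollonian group $\mathcal A$ is the subgroup of $GL(4,\mathbb Z)$ they generate, and $\mathcal A[\mathbf v]=\{\mathbf U\mathbf v:\mathbf U\in\mathcal A\}$. *)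

From HB Require Import structures.
From mathcomp Require Import all_boot all_order all_algebra.
Set Implicit Arguments. Unset Strict Implicit. Unset Printing Implicit Defensive.
Import Order.TTheory GRing.Theory Num.Theory.
Local Open Scope ring_scope.

Definition QD (v : 'cV[int]_4) : int :=
  2 * (\sum_(i < 4) v i 0 ^+ 2) - (\sum_(i < 4) v i 0) ^+ 2.

Definition apolS (i : 'I_4) : 'M[int]_4 :=
  \matrix_(r < 4, c < 4)
    (if r == i then (if c == i then -1 else 2) else (r == c)%:R).

Inductive apollonian_group : 'M[int]_4 -> Prop :=
  | ag_gen (i : 'I_4) : apollonian_group (apolS i)
  | ag_one : apollonian_group 1%:M
  | ag_mul U V : apollonian_group U -> apollonian_group V ->
                 apollonian_group (U *m V)
  | ag_inv U : apollonian_group U -> U \in unitmx ->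
               apollonian_group (invmx U).

Definition apollonian_orbit (v : 'cV[int]_4) (w : 'cV[int]_4) : Prop :=
  exists U, apollonian_group U /\ w = U *m v.

Definition curvatures (v : 'cV[int]_4) (c : int) : Prop :=
  exists w, apollonian_orbit v w /\ exists j : 'I_4, w j 0 = c.

From mathcomp Require Import all_boot all_order all_algebra.
From mathcomp Require Import zify ring.
Set Implicit Arguments. Unset Strict Implicit. Unset Printing Implicit Defensive.
Import Order.TTheory GRing.Theory Num.Theory.
Local Open Scope ring_scope.

(* The generator S_k moves only the k-th coordinate, by 2 s - 4 w_k where s
   is the coordinate sum.  So the parity of s is an orbit invariant, and when
   s is even every coordinate is constant modulo 4 along the orbit; Q_D(v) = 4
   forces s to be even.  If the coordinates of v met all four classes modulo
   4, then Q_D(v) would be congruent modulo 8 to Q_D(0,1,2,3) = -8, not to 4.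
   Hence some class x modulo 4 contains no curvature, and neither do the
   classes x, x + 4, x + 8 modulo 12. *)

Definition sumc n (w : 'cV[int]_n) : int := \sum_(i < n) w i 0.

Lemma apolS_mulE k (w : 'cV[int]_4) i :
  (apolS k *m w) i 0 = w i 0 + (i == k)%:R * (2 * sumc w - 4 * w k 0).
Proof.
rewrite mxE; under eq_bigr do rewrite mxE.
have [-> | neq_ik] := eqVneq i k; last first.
  rewrite mul0r addr0 (bigD1 i) //= eqxx mul1r big1 ?addr0 //.
  by move=> j /negPf neq_ji; rewrite eq_sym neq_ji mul0r.
rewrite /sumc (bigD1 k) // [in RHS](bigD1 k) //= eqxx.
rewrite (eq_bigr (fun j => 2 * w j 0)) => [|j /negPf -> //].
rewrite -mulr_sumr; ring.
Qed.

Lemma sumc_apolS k (w : 'cV[int]_4) :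
  sumc (apolS k *m w) = 3 * sumc w - 4 * w k 0.
Proof.
rewrite {1}/sumc (eq_bigr _ (fun i _ => apolS_mulE k w i)) big_split /=.
rewrite -big_distrl /= -/(sumc w) (bigD1 k) //= eqxx big1 => [|i /negPf -> //].
rewrite /= addr0; ring.
Qed.

(* The parity clause is what makes this closed under products and inverses. *)
Definition fixes_classes_mod4 (U : 'M[int]_4) : Prop :=
  forall w : 'cV[int]_4,
    (sumc (U *m w) = sumc w %[mod 2])%Z /\
    ((2 %| sumc w)%Z -> forall i, ((U *m w) i 0%R = w i 0%R %[mod 4])%Z).

Lemma fixes_classes_mod4_apolS k : fixes_classes_mod4 (apolS k).
Proof.
move=> w; rewrite sumc_apolS; split=> [|even_w i]; first lia.
rewrite apolS_mulE; case: (i == k) => /=; lia.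
Qed.

Lemma fixes_classes_mod4_1 : fixes_classes_mod4 1%:M.
Proof. by move=> w; rewrite mul1mx. Qed.

Lemma fixes_classes_mod4_mul U V :
  fixes_classes_mod4 U -> fixes_classes_mod4 V -> fixes_classes_mod4 (U *m V).
Proof.
move=> fixU fixV w; rewrite -mulmxA.
have [sumV modV] := fixV w; have [sumU modU] := fixU (V *m w).
split=> [|even_w i]; first by rewrite sumU.
have even_Vw : (2 %| sumc (V *m w))%Z by move: even_w sumV; lia.
by rewrite modU // modV.
Qed.

Lemma fixes_classes_mod4_inv U :
  U \in unitmx -> fixes_classes_mod4 U -> fixes_classes_mod4 (invmx U).
Proof.
move=> unitU fixU w; have [sumU modU] := fixU (invmx U *m w).
rewrite mulmxA mulmxV // mul1mx in sumU modU.
split=> [|even_w i]; first by rewrite sumU.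
have even_Uw : (2 %| sumc (invmx U *m w))%Z by move: even_w sumU; lia.
by rewrite modU.
Qed.

Lemma apollonian_fixes_classes_mod4 U :
  apollonian_group U -> fixes_classes_mod4 U.
Proof.
elim=> [k | | {}U V _ fixU _ fixV | {}U _ fixU unitU].
- exact: fixes_classes_mod4_apolS.
- exact: fixes_classes_mod4_1.
- exact: fixes_classes_mod4_mul.
- exact: fixes_classes_mod4_inv.
Qed.

Lemma apollonian_orbit_mod4 v w :
  (2 %| sumc v)%Z -> apollonian_orbit v w ->
  forall i, (w i 0%R = v i 0%R %[mod 4])%Z.
Proof.
by move=> even_v [U [agU ->]]; have [_] := apollonian_fixes_classes_mod4 agU v; apply.
Qed.

Lemma Euclid_dvdzX (p : nat) (m : int) n :
  prime p -> (p %| m ^+ n.+1)%Z = (p %| m)%Z.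
Proof. by move=> p_pr; rewrite /dvdz !unfold_in abszX Euclid_dvdX ?andbT. Qed.

Lemma dvd2_QD v : (2 %| QD v)%Z = (2 %| sumc v)%Z.
Proof.
rewrite /QD -/(sumc v) rpredBl; last exact/dvdz_mulr/dvdzz.
exact: (@Euclid_dvdzX 2).
Qed.

Lemma QD_add_mul4_mod8 v k : (QD (v + 4 *: k) = QD v %[mod 8])%Z.
Proof.
rewrite /QD.
have sumD : \sum_(i < 4) (v + 4 *: k) i 0 =
    \sum_(i < 4) v i 0 + 4 * \sum_(i < 4) k i 0.
  by rewrite mulr_sumr -big_split; apply: eq_bigr => i _; rewrite !mxE.
have sqD : \sum_(i < 4) (v + 4 *: k) i 0 ^+ 2 = \sum_(i < 4) v i 0 ^+ 2
    + 8 * \sum_(i < 4) v i 0 * k i 0 + 16 * \sum_(i < 4) k i 0 ^+ 2.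
  rewrite !mulr_sumr -!big_split; apply: eq_bigr => i _; rewrite !mxE /=; ring.
rewrite sumD sqD; apply/eqP; rewrite eqz_mod_dvd; apply/dvdzP.
set s := \sum_(i < 4) v i 0; set t := \sum_(i < 4) k i 0.
set vk := \sum_(i < 4) v i 0 * k i 0; set kk := \sum_(i < 4) k i 0 ^+ 2.
by exists (2 * vk + 4 * kk - s * t - 2 * t ^+ 2); ring.
Qed.

Lemma QD_perm_0123 (v : 'cV[int]_4) (g : 'I_4 -> 'I_4) :
  injective g -> (forall x, v (g x) 0 = x%:Z) -> QD v = -8.
Proof.
move=> inj_g vg.
rewrite /QD [\sum_(i < 4) v i 0 ^+ 2](reindex_inj inj_g).
rewrite [\sum_(i < 4) v i 0](reindex_inj inj_g) /=.
rewrite (eq_bigr (fun x : 'I_4 => x%:Z ^+ 2)) => [|x _]; last by rewrite vg.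
rewrite (eq_bigr (fun x : 'I_4 => x%:Z)) => [|x _]; last by rewrite vg.
by rewrite !big_ord_recr !big_ord0.
Qed.

Lemma QD_all_classes_mod4 (v : 'cV[int]_4) :
  (forall x : 'I_4, exists i, (v i 0%R %% 4)%Z = x%:Z) -> (8 %| QD v)%Z.
Proof.
move=> /fin_all_exists[g vg].
have inj_g : injective g.
  by move=> x y gxy; apply: val_inj; have := vg y; rewrite -gxy vg => -[].
pose r := \col_i (v i 0%R %% 4)%Z; pose q := \col_i (v i 0%R %/ 4)%Z.
have -> : v = r + 4 *: q by apply/matrixP => i j; rewrite ord1 !mxE; lia.
have QDr : QD r = -8 by apply: (QD_perm_0123 inj_g) => x; rewrite mxE vg.
by have := QD_add_mul4_mod8 r q; rewrite QDr; lia.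
Qed.

Lemma QD_missing_class_mod4 (v : 'cV[int]_4) :
  QD v = 4 -> exists x : 'I_4, forall i, (v i 0%R %% 4)%Z != x%:Z.
Proof.
move=> QDv.
have [/existsP[x /forallP missed] | ] :=
  boolP [exists x : 'I_4, [forall i, (v i 0%R %% 4)%Z != x%:Z]].
  by exists x.
rewrite negb_exists => /forallP hit.
have : (8 %| QD v)%Z.
  apply: QD_all_classes_mod4 => x.
  by have /forallPn[i /negPn /eqP] := hit x; exists i.
by rewrite QDv.
Qed.

Lemma card_classes_mod12 (x : 'I_4) :
  (3 <= #|[set r : 'I_12 | (r %% 4 == x)%N]|)%N.
Proof.
apply/card_gt2P; exists (inord x), (inord (x + 4)), (inord (x + 8)).
have x_lt4 := ltn_ord x.
rewrite !inE !inordK; try lia.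
split; first by split; apply/eqP; lia.
by split; apply/eqP => /(congr1 val); rewrite /= !inordK; lia.
Qed.

Theorem theorem5p2 (v : 'cV[int]_4) :
  QD v = 4 ->
  exists A : {set 'I_12},
    (3 <= #|A|)%N /\
    forall c : int, curvatures v c ->
      forall r : 'I_12, r \in A -> (c %% 12)%Z != (nat_of_ord r)%:Z.
Proof.
move=> QDv.
have even_v : (2 %| sumc v)%Z by rewrite -dvd2_QD QDv.
have [x missed] := QD_missing_class_mod4 QDv.
exists [set r : 'I_12 | (r %% 4 == x)%N]; split; first exact: card_classes_mod12.
move=> c [w [orbit_w [j <-]]] r; rewrite inE => /eqP r_mod4.
have := apollonian_orbit_mod4 even_v orbit_w j; have := missed j.
lia.
Qed.
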